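(* Let $n_1,n_2$ be coprime positive integers with $n_2<n_1$ and $n_1>1$. Let $r_0$ be a nonnegative rational number. Let $[a_0,a_1,\dots,a_L]$ be the continued fraction expansion of $n_2/n_1$ and $[b_0,b_1,\dots,b_M]$ the continued fraction expansion of $r_0$ (standard algorithm described in the context). If $$\left|r_0-\frac{n_2}{n_1}\right|<\frac{1}{4n_1(n_1-1)},$$ then one of the following holds: (1) $a_i=b_i$ for $i=0,1,\dots,L$; (2) $a_i=b_i$ for $i=0,1,\dots,L-1$, $a_L-1=b_L$, and $b_{L+1}=1$.
   Context: Continued fraction expansion of a nonnegative rational number $y$ (standard algorithm): set $c_0=\lfloor y\rfloor$ and $s_0=y-c_0$; for $i\ge1$, as long as $s_{i-1}\neq0$, set $c_i=\lfloor 1/s_{i-1}\rfloor$ and $s_i=1/s_{i-1}-c_i$. The process stops at the first index $M$ with $s_M=0$, and the expansion is $[c_0,c_1,\dots,c_M]$, meaning $y=c_0+\cfrac{1}{c_1+\cfrac{1}{\ddots+\cfrac{1}{c_M}}}$. *)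

From mathcomp Require Import all_boot all_order all_algebra.
Set Implicit Arguments. Unset Strict Implicit. Unset Printing Implicit Defensive.
Import Order.TTheory GRing.Theory Num.Theory.
Local Open Scope ring_scope.

(* Continued fraction expansion of a rational y by the standard algorithm:
   c_0 = floor y, s_0 = y - c_0; while s_{i-1} <> 0:
   c_i = floor (1/s_{i-1}), s_i = 1/s_{i-1} - c_i.
   [cf_fuel k y] performs at most k reciprocal steps; [cf y] uses the fuel
   [denq y], which is always sufficient since the denominator strictly
   decreases at each step (the algorithm therefore always stops before
   the fuel runs out, and [cf y] is exactly [c_0; ...; c_M]). *)
Fixpoint cf_fuel (k : nat) (y : rat) : seq int :=
  let c := Num.floor y in
  let s := y - c%:~R in
  match k with
  | O => [:: c]
  | S k' => if s == 0 then [:: c] else c :: cf_fuel k' s^-1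
  end.

Definition cf (y : rat) : seq int := cf_fuel `|denq y|%N y.

From mathcomp Require Import all_boot all_order all_algebra ring lra zify.
Import Order.TTheory GRing.Theory Num.Theory.
Local Open Scope ring_scope.

(* Write p / q = a0 + 1 / (q / p') with p' = p mod q.  The radius
   1 / (4q(q-1)) is small enough to force r - a0 into (0, 1), so
   r = a0 + 1 / u with u > 1 and both expansions start with a0.  If p' >= 2,
   inverting keeps the error within the radius of the smaller denominator p',
   |u - q / p'| < 1 / (4p'(p'-1)), and we recurse.  If p' = 1, then q / p' is
   the integer q and u lies in (q - 1/2, q + 1): either u starts with q, or
   u = (q - 1) + 1 / v with v in (1, 2), which is the second alternative. *)

Lemma denq_addz (c : int) (x : rat) : denq (c%:~R + x) = denq x.
Proof.
have -> : c%:~R + x = (c * denq x + numq x)%:~R / (denq x)%:~R.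
  by rewrite rmorphD rmorphM /= mulrDl mulfK ?intr_eq0 ?denq_neq0 // divq_num_den.
rewrite coprimeq_den ?denq_eq0 ?normr_denq //.
have := coprime_num_den x; rewrite /coprime.
rewrite -[gcdn _ _]/(`|gcdz (numq x) (denq x)|%N).
rewrite -[gcdn `|_| `|denq x|]/(`|gcdz _ (denq x)|%N).
by rewrite [gcdz (_ + _) _]gcdzC gcdzMDl gcdzC.
Qed.

Lemma denqV (s : rat) : 0 < s -> denq s^-1 = numq s.
Proof.
move=> s_gt0; rewrite -{1}[s]divq_num_den invf_div coprimeq_den.
  by rewrite gt_eqF ?numq_gt0 // gtr0_norm ?numq_gt0.
by rewrite coprime_sym coprime_num_den.
Qed.

Lemma numq_lt_denq (s : rat) : s < 1 -> numq s < denq s.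
Proof.
move=> s_lt1; rewrite -(ltr_int rat) numqE.
by rewrite -[X in _ < X]mul1r ltr_pM2r // ltr0z denq_gt0.
Qed.

Definition frac_part (y : rat) : rat := y - (Num.floor y)%:~R.

Lemma frac_part_itv y : 0 <= frac_part y < 1.
Proof.
have /andP[lo hi] := floor_itv y.
rewrite /frac_part subr_ge0 lo /=; move: hi; rewrite rmorphD /=; lra.
Qed.

Lemma denq_frac_part y : denq (frac_part y) = denq y.
Proof. by rewrite /frac_part addrC -intrN denq_addz. Qed.

Lemma denq_inv_frac_part {y} : frac_part y != 0 -> denq (frac_part y)^-1 < denq y.
Proof.
move=> s_neq0; have /andP[s_ge0 s_lt1] := frac_part_itv y.
rewrite denqV ?lt0r ?s_neq0 // -denq_frac_part.
exact: numq_lt_denq.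
Qed.

(* Denominators strictly decrease along the expansion, so any fuel of at least
   denq y - 1 reaches the end. *)
Lemma cf_fuel_eq k m y : denq y <= k.+1 -> denq y <= m.+1 ->
  cf_fuel k y = cf_fuel m y.
Proof.
elim: k m y => [|k IH] [|m] y //=; rewrite -/(frac_part y);
  have := @denq_inv_frac_part y; case: eqP => // _ /(_ isT) lt_den le_k le_m.
- by move: lt_den le_k; have := denq_gt0 (frac_part y)^-1; lia.
- by move: lt_den le_m; have := denq_gt0 (frac_part y)^-1; lia.
- by congr (_ :: _); apply: IH; lia.
Qed.

Lemma cf_fuel_cf k y : denq y <= k.+1 -> cf_fuel k y = cf y.
Proof.
move=> den_k; rewrite /cf; have [m den_y] := denqP y.
by rewrite den_y; apply: cf_fuel_eq; lia.
Qed.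

Lemma cf_unfold y : cf y =
  if frac_part y == 0 then [:: Num.floor y] else Num.floor y :: cf (frac_part y)^-1.
Proof.
rewrite /cf; have [d den_y] := denqP y; rewrite den_y /= -/(frac_part y).
case: eqP => // /eqP s_neq0; congr (_ :: _); apply: cf_fuel_cf.
by have := denq_inv_frac_part s_neq0; rewrite den_y; lia.
Qed.

Lemma cf_int (c : int) : cf c%:~R = [:: c].
Proof. by rewrite cf_unfold /frac_part intrKfloor subrr eqxx. Qed.

Lemma cf_add_inv (c : int) (u : rat) : 1 < u -> cf (c%:~R + u^-1) = c :: cf u.
Proof.
move=> u_gt1; have ui_gt0 : 0 < u^-1 by rewrite invr_gt0; lra.
have ui_lt1 : u^-1 < 1 by rewrite invf_lt1; lra.
have floor_c : Num.floor (c%:~R + u^-1) = c.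
  by apply: floor_def; rewrite rmorphD /=; lra.
by rewrite cf_unfold /frac_part floor_c addrC addKr gt_eqF // invrK.
Qed.

Lemma cf_cons y : exists t, cf y = Num.floor y :: t.
Proof. by rewrite cf_unfold; case: eqP; eexists. Qed.

Section Radius.
Context {R : realFieldType}.
Implicit Types p q d b t : R.

Definition cf_radius q : R := 1 / (4 * q * (q - 1)).

Lemma cf_radius_gt0 {q} : 1 < q -> 0 < cf_radius q.
Proof. by move=> q_gt1; rewrite /cf_radius mul1r invr_gt0 !pmulr_rgt0 //; lra. Qed.

Lemma cf_radius_mul {q} : 1 < q -> q * cf_radius q * (4 * (q - 1)) = 1.
Proof. by move=> q_gt1; rewrite /cf_radius; field; apply/andP; split; lra. Qed.

Lemma dist_inv_lt b d t : 0 < t < b -> `|d - b| < t ->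
  `|d^-1 - b^-1| < t / (b * (b - t)).
Proof.
move=> /andP[t_gt0 t_ltb] db_lt; have := db_lt; rewrite ltr_distl => /andP[d_gt _].
have d_gt0 : 0 < d by lra.
have -> : d^-1 - b^-1 = (b - d) / (d * b) by field; apply/andP; split; lra.
rewrite normrM normfV (gtr0_norm (mulr_gt0 d_gt0 _)); last by lra.
rewrite distrC ltr_pdivrMr ?mulr_gt0 //; last by lra.
apply: (lt_le_trans db_lt).
have -> : t / (b * (b - t)) * (d * b) = t * (d / (b - t)) by field; lra.
by rewrite ler_peMr ?ltW // ltr_pdivlMr ?mul1r; lra.
Qed.

Lemma near_fraction_in_unit p q d : 1 <= p -> p + 1 <= q ->
  `|d - p / q| < cf_radius q -> 0 < d < 1.
Proof.
move=> p_ge1 pq; have q_gt1 : 1 < q by lra.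
have := cf_radius_gt0 q_gt1; have := cf_radius_mul q_gt1.
set e := cf_radius q => He e_gt0.
rewrite ltr_distl => /andP[lo hi].
have pqq : p / q * q = p by rewrite mulfVK ?gt_eqF //; lra.
have : p - q * e < d * q < p + q * e by apply/andP; split; nra.
move=> /andP[lo' hi']; apply/andP; split; nra.
Qed.

Lemma near_inv_bounds q d : 2 <= q -> `|d - q^-1| < cf_radius q ->
  q - 1 / 2 < d^-1 < q + 1.
Proof.
move=> q_ge2; have q_gt1 : 1 < q by lra.
have := cf_radius_gt0 q_gt1; have := cf_radius_mul q_gt1.
set e := cf_radius q => He e_gt0.
rewrite ltr_distl => /andP[lo hi].
have qq : q^-1 * q = 1 by rewrite mulVf ?gt_eqF //; lra.
have : 1 - q * e < d * q < 1 + q * e by apply/andP; split; nra.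
move=> /andP[lo' hi']; have d_gt0 : 0 < d by nra.
have d_inv c : (c < d^-1) = (c * d < 1) by rewrite -[d^-1]mul1r ltr_pdivlMr.
have inv_d c : (d^-1 < c) = (1 < c * d) by rewrite -[d^-1]mul1r ltr_pdivrMr.
rewrite d_inv inv_d; apply/andP; split; nra.
Qed.

Lemma near_fraction_inv p q d : 2 <= p -> p + 1 <= q ->
  `|d - p / q| < cf_radius q -> `|d^-1 - q / p| < cf_radius p.
Proof.
move=> p_ge2 pq; have q_gt1 : 1 < q by lra.
have := cf_radius_gt0 q_gt1; have := cf_radius_mul q_gt1.
set e := cf_radius q => He e_gt0; set b := p / q.
have qe_gt0 : 0 < q * e by apply: mulr_gt0; lra.
have b_gt0 : 0 < b by apply: divr_gt0; lra.
have e_ltb : e < b.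
  have pqq : b * q = p by rewrite mulfVK ?gt_eqF //; lra.
  nra.
(* Multiplied by q^2, [key] reduces to q e (4p - 3) <= 1, i.e. to 4p + 1 <= 4q. *)
have key : 4 * p * (p - 1) * e <= b * (b - e).
  have E : (b * (b - e) - 4 * p * (p - 1) * e) * (q * q) = p * (1 - q * e * (4 * p - 3)).
    by rewrite /b /e /cf_radius; field; apply/andP; split; lra.
  have : 0 <= (b * (b - e) - 4 * p * (p - 1) * e) * (q * q).
    by rewrite E mulr_ge0 //; nra.
  by rewrite pmulr_lge0 ?subr_ge0 //; nra.
move=> /(dist_inv_lt _); rewrite e_gt0 e_ltb invf_div => /(_ isT) /lt_le_trans; apply.
rewrite ler_pdivrMr; last by rewrite mulr_gt0 // subr_gt0.
rewrite /cf_radius mul1r mulrC ler_pdivlMr; first by rewrite mulrC.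
by rewrite !pmulr_rgt0 //; lra.
Qed.

End Radius.

Definition cf_agree (a b : seq int) : Prop :=
  let L := (size a).-1 in
  ((L < size b)%N /\ (forall i, (i <= L)%N -> nth 0 a i = nth 0 b i))
  \/
  [/\ (L.+1 < size b)%N,
      (forall i, (i < L)%N -> nth 0 a i = nth 0 b i),
      nth 0 a L - 1 = nth 0 b L
    & nth 0 b L.+1 = 1].

Lemma cf_agree_cons c a b : a != [::] -> cf_agree a b -> cf_agree (c :: a) (c :: b).
Proof.
case: a => // a0 a _ [[size_b eq_ab]|[size_b eq_ab last_ab next_b]].
- by left; split => // -[|i] //= /eq_ab.
- by right; split => // -[|i] //= /eq_ab.
Qed.

Lemma cf_agree_int (c : int) (u : rat) : c%:~R - 1 / 2 < u < c%:~R + 1 ->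
  cf_agree [:: c] (cf u).
Proof.
move=> /andP[lo hi]; have [c_le_u|u_lt_c] := lerP c%:~R u.
  have floor_u : Num.floor u = c by apply: floor_def; rewrite c_le_u rmorphD /=; lra.
  by have [t ->] := cf_cons u; rewrite floor_u; left; split => // -[|i].
have -> : u = (c - 1)%:~R + ((u - (c - 1)%:~R)^-1)^-1 by rewrite invrK addrC subrK.
set s := u - (c - 1)%:~R.
have s_itv : 1 / 2 < s < 1 by rewrite /s rmorphB /=; apply/andP; split; lra.
have /andP[s_gt_half s_lt1] := s_itv; have s_gt0 : 0 < s by lra.
have sV_gt1 : 1 < s^-1 by rewrite invf_gt1.
have floor_sV : Num.floor s^-1 = 1.
  apply: floor_def; rewrite (ltW sV_gt1) /= invf_plt ?posrE //; lra.
rewrite cf_add_inv //; have [t ->] := cf_cons s^-1; rewrite floor_sV.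
by right; split => // -[|i].
Qed.

Lemma cf_agree_near (q p : nat) (r : rat) : (1 < q)%N -> coprime q p ->
  `|r - p%:R / q%:R| < cf_radius q%:R -> cf_agree (cf (p%:R / q%:R)) (cf r).
Proof.
elim/ltn_ind: q p r => q IH p r q_gt1 q_coprime_p near_r.
set p' := (p %% q)%N; set a0 := (p %/ q)%N.
have q_coprime_p' : coprime q p' by rewrite coprime_modr.
have p'_gt0 : (0 < p')%N.
  rewrite lt0n; apply: contraTneq q_coprime_p' => ->.
  by rewrite /coprime gcdn0 neq_ltn q_gt1 orbT.
have p'_lt_q : (p' < q)%N by rewrite ltn_pmod // ltnW.
have q_gt0 : 0 < q%:R :> rat by rewrite ltr0n ltnW.
have pqE : p%:R / q%:R = a0%:Z%:~R + (q%:R / p'%:R)^-1 :> rat.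
  by rewrite invf_div {1}(divn_eq p q) natrD natrM mulrDl mulfK ?gt_eqF //.
set d := r - a0%:Z%:~R.
have near_d : `|d - p'%:R / q%:R| < cf_radius q%:R.
  by move: near_r; rewrite pqE invf_div /d opprD addrA.
have /andP[d_gt0 d_lt1] : 0 < d < 1.
  by apply: near_fraction_in_unit near_d; rewrite ?ler1n // natr1 ler_nat.
have rE : r = a0%:Z%:~R + (d^-1)^-1 by rewrite invrK /d addrC subrK.
have q_p'_gt1 : 1 < q%:R / p'%:R :> rat by rewrite ltr_pdivlMr ?mul1r ?ltr_nat ?ltr0n.
rewrite pqE rE !cf_add_inv ?invf_gt1 //; apply: cf_agree_cons.
  by have [t ->] := cf_cons (q%:R / p'%:R).
have [p'_eq1|p'_neq1] := eqVneq p' 1%N.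
  rewrite p'_eq1 divr1 pmulrn cf_int; apply: cf_agree_int; rewrite -pmulrn.
  by apply: near_inv_bounds; move: near_d; rewrite ?ler_nat // p'_eq1 div1r.
have p'_gt1 : (1 < p')%N by rewrite ltn_neqAle eq_sym p'_neq1.
apply: (IH p' p'_lt_q) => //; first by rewrite coprime_sym.
by apply: near_fraction_inv near_d; rewrite ?natr1 ler_nat.
Qed.

Theorem theorem5 (n1 n2 : nat) (r0 : rat) :
  coprime n1 n2 -> (0 < n2)%N -> (n2 < n1)%N -> (1 < n1)%N ->
  0 <= r0 ->
  `|r0 - n2%:R / n1%:R| < 1 / (4 * n1%:R * (n1%:R - 1)) ->
  let a := cf (n2%:R / n1%:R) in
  let b := cf r0 in
  let L := (size a).-1 in
  ((L < size b)%N /\ (forall i, (i <= L)%N -> nth 0 a i = nth 0 b i))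
  \/
  [/\ (L.+1 < size b)%N,
      (forall i, (i < L)%N -> nth 0 a i = nth 0 b i),
      nth 0 a L - 1 = nth 0 b L
    & nth 0 b L.+1 = 1].
Proof.
move=> n1_coprime_n2 _ _ n1_gt1 _ near_r0.
exact: cf_agree_near.
Qed.
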